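(* For every $n$, $\mathrm{ex}(n,M,K_3)=\mathcal N(M,T_2(n))$ and $\mathrm{ex}(n,M',K_3)=\mathcal N(M',T_2(n))$.
   Context: $M$ is the five-vertex graph consisting of two independent edges and an isolated vertex; $M'$ is the five-vertex graph consisting of a path $P_3$ on three vertices and a disjoint edge. $T_2(n)$ is the complete bipartite graph on $n$ vertices with parts of sizes $\lfloor n/2\rfloor$ and $\lceil n/2\rceil$. $\mathcal N(H,G)$ is the number of subgraphs of $G$ isomorphic to $H$; $\mathrm{ex}(n,H,K_3)$ is the maximum of $\mathcal N(H,G)$ over triangle-free $n$-vertex graphs $G$. *)

From mathcomp Require Import all_boot all_order.
Set Implicit Arguments. Unset Strict Implicit. Unset Printing Implicit Defensive.

(* A simple graph on vertex set 'I_n is represented by its edge set: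
   a set of 2-element subsets of 'I_n. *)
Definition simple_graph (n : nat) (E : {set {set 'I_n}}) : bool :=
  [forall e in E, #|e| == 2].

Definition triangle_free (n : nat) (E : {set {set 'I_n}}) : bool :=
  ~~ [exists x : 'I_n, exists y : 'I_n, exists z : 'I_n,
        [&& [set x; y] \in E, [set y; z] \in E & [set x; z] \in E]].

(* A subgraph (S, F) of G = ('I_n, E): S a vertex set, F a set of edges of G.
   It is a copy of H = ('I_k, EH) if there is a bijection f : 'I_k -> S
   mapping the edge set EH exactly onto F. *)
Definition is_copy (k n : nat) (EH : {set {set 'I_k}}) (E : {set {set 'I_n}})
  (S : {set 'I_n}) (F : {set {set 'I_n}}) : bool :=
  (F \subset E) &&
  [exists f : {ffun 'I_k -> 'I_n},
     [&& injectiveb f, f @: setT == S & F == [set (f @: e) | e : {set 'I_k} in EH]]].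

Definition num_copies (k n : nat) (EH : {set {set 'I_k}}) (E : {set {set 'I_n}}) : nat :=
  #|[set p : {set 'I_n} * {set {set 'I_n}} | is_copy EH E p.1 p.2]|.

Definition ex_K3 (k n : nat) (EH : {set {set 'I_k}}) : nat :=
  \max_(E : {set {set 'I_n}} | simple_graph E && triangle_free E) num_copies EH E.

(* T_2(n): parts {i < n/2} (size floor(n/2)) and {i >= n/2} (size ceil(n/2)). *)
Definition T2 (n : nat) : {set {set 'I_n}} :=
  [set e : {set 'I_n} | [exists i : 'I_n, exists j : 'I_n,
      [&& (i < n./2)%N, (n./2 <= j)%N & e == [set i; j]]]].

(* M: two independent edges plus an isolated vertex, on 'I_5. *)
Definition M_graph : {set {set 'I_5}} :=
  [set [set (inord 0 : 'I_5); inord 1]; [set (inord 2 : 'I_5); inord 3]].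

(* M': a path P_3 plus a disjoint edge, on 'I_5. *)
Definition M'_graph : {set {set 'I_5}} :=
  [set [set (inord 0 : 'I_5); inord 1]; [set (inord 1 : 'I_5); inord 2];
       [set (inord 3 : 'I_5); inord 4]].

From mathcomp Require Import all_boot all_order zify fingroup perm.
Set Implicit Arguments. Unset Strict Implicit. Unset Printing Implicit Defensive.

(* Every copy of a graph H in G is the image of exactly |Aut H| injective
   homomorphisms H -> G, so it suffices to compare labelled copies.  A labelled
   copy of M is an ordered edge ab, an ordered edge cd of G - a - b and a fifth
   vertex; applying Mantel's theorem to G and to G - a - b bounds their number
   in a triangle-free G by the value attained by T_2(n).  In a labelled copy of
   M the fifth vertex is adjacent to at most one end of the edge ab when G is
   triangle-free, and to exactly one when G is complete bipartite; attaching it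
   to that end produces a labelled copy of M'.  Hence twice the number of
   labelled copies of M' is at most the number of labelled copies of M, with
   equality for T_2(n). *)

Lemma sum_indicator_card (T : finType) (A : {pred T}) : \sum_x (x \in A : nat) = #|A|.
Proof. by rewrite -sum1_card [RHS]big_mkcond; apply: eq_bigr => x _; case: (x \in A). Qed.

Section Copies.
Variables (k n : nat) (EH : {set {set 'I_k}}) (E : {set {set 'I_n}}).

Definition embeddings : {set {ffun 'I_k -> 'I_n}} :=
  [set f : {ffun 'I_k -> 'I_n} |
     injectiveb f && ([set f @: e | e : {set 'I_k} in EH] \subset E)].

Definition copy_of (f : {ffun 'I_k -> 'I_n}) :=
  (f @: setT, [set f @: e | e : {set 'I_k} in EH]).

Definition automorphisms : {set {perm 'I_k}} :=
  [set s : {perm 'I_k} | [set s @: e | e : {set 'I_k} in EH] == EH].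

Definition relabel (f : {ffun 'I_k -> 'I_n}) (s : {perm 'I_k}) := [ffun i => f (s i)].

Lemma relabel_imset f s (A : {set 'I_k}) : relabel f s @: A = f @: (s @: A).
Proof. by rewrite -imset_comp; apply: eq_imset => i; rewrite ffunE. Qed.

Lemma num_copiesE : num_copies EH E = #|copy_of @: embeddings|.
Proof.
apply: eq_card => -[S F]; rewrite inE /is_copy /=; apply/idP/imsetP.
- case/andP=> FE /existsP [f /and3P [injf /eqP fS /eqP Ff]].
  exists f; last by rewrite /copy_of fS Ff.
  by rewrite inE injf -Ff.
- case=> f; rewrite inE => /andP [injf fE] [-> ->].
  by rewrite fE; apply/existsP; exists f; rewrite injf !eqxx.
Qed.

Lemma relabel_embedding f s :
  f \in embeddings -> s \in automorphisms ->
  relabel f s \in embeddings /\ copy_of (relabel f s) = copy_of f.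
Proof.
rewrite !inE => /andP [/injectiveP injf fE] /eqP sH.
have copyE :
    [set relabel f s @: e | e : {set 'I_k} in EH] = [set f @: e | e : {set 'I_k} in EH].
  by rewrite -[in RHS]sH -imset_comp; apply: eq_imset => e; rewrite /= relabel_imset.
have sT : s @: setT = setT.
  by apply/eqP; rewrite eqEcard subsetT (card_imset _ (@perm_inj _ s)) leqnn.
rewrite copyE fE andbT /copy_of relabel_imset sT copyE; split=> //.
by apply/injectiveP => i j; rewrite !ffunE => /injf /perm_inj.
Qed.

Lemma copy_of_eq_relabel f g :
  f \in embeddings -> g \in embeddings -> copy_of g = copy_of f ->
  exists2 s, s \in automorphisms & g = relabel f s.
Proof.
rewrite !inE => /andP [/injectiveP injf _] /andP [/injectiveP injg _] [gT gH].
have fs i : {j | f j == g i}.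
  apply: sigW; have : g i \in f @: setT by rewrite -gT imset_f.
  by case/imsetP => j _ ->; exists j.
pose s i := sval (fs i).
have fsE i : f (s i) = g i by apply/eqP; exact: svalP (fs i).
have s_inj : injective s by move=> i j sij; apply: injg; rewrite -!fsE sij.
have gE : g = relabel f (perm s_inj) by apply/ffunP => i; rewrite !ffunE permE fsE.
exists (perm s_inj) => //.
rewrite inE eqEcard card_imset; last exact/imset_inj/perm_inj.
rewrite leqnn andbT; apply/subsetP => _ /imsetP [e eH ->].
have : g @: e \in [set g @: e | e : {set 'I_k} in EH] by rewrite imset_f.
rewrite gH => /imsetP [e' e'H]; rewrite gE relabel_imset => /(imset_inj injf) ->.
exact: e'H.
Qed.

Lemma copy_fiber f : f \in embeddings ->
  [set g in embeddings | copy_of g == copy_of f] = relabel f @: automorphisms.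
Proof.
move=> fE; apply/setP => g; rewrite inE; apply/andP/imsetP.
- by case=> gE /eqP gf; have [s sA ->] := copy_of_eq_relabel fE gE gf; exists s.
- by case=> s sA ->; have [-> ->] := relabel_embedding fE sA.
Qed.

Lemma card_embeddings : #|embeddings| = #|automorphisms| * num_copies EH E.
Proof.
rewrite num_copiesE -sum1_card (partition_big_imset copy_of) /= mulnC -sum_nat_const.
apply: eq_bigr => _ /imsetP [f fE ->].
have /injectiveP injf : injectiveb f by move: fE; rewrite inE => /andP [].
have relabel_inj : injective (relabel f).
  by move=> s t /ffunP st; apply/permP => i; apply: injf; have := st i; rewrite !ffunE.
rewrite -(card_imset _ relabel_inj) -copy_fiber // -sum1_card.
by apply: eq_bigl => g; rewrite !inE.
Qed.

Lemma automorphisms_gt0 : 0 < #|automorphisms|.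
Proof.
apply/card_gt0P; exists 1%g; rewrite inE -[X in _ == X]imset_id.
by apply/eqP/eq_imset => e; rewrite imset_perm1.
Qed.

End Copies.

Lemma leq_num_copies k n (EH : {set {set 'I_k}}) (E E' : {set {set 'I_n}}) :
  #|embeddings EH E| <= #|embeddings EH E'| -> num_copies EH E <= num_copies EH E'.
Proof. by rewrite !card_embeddings leq_pmul2l // automorphisms_gt0. Qed.

Section FiveTuples.
Variable T : finType.

Definition tuple5 (a b c d w : T) : {ffun 'I_5 -> T} :=
  [ffun i : 'I_5 => nth a [:: a; b; c; d; w] i].

Lemma tuple5_eta (f : {ffun 'I_5 -> T}) :
  tuple5 (f (inord 0)) (f (inord 1)) (f (inord 2)) (f (inord 3)) (f (inord 4)) = f.
Proof.
apply/ffunP => i; rewrite ffunE -[in RHS](inord_val i).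
by case: i => -[|[|[|[|[|i]]]]].
Qed.

Lemma sum_ffun5 (F : {ffun 'I_5 -> T} -> nat) :
  \sum_f F f = \sum_a \sum_b \sum_c \sum_d \sum_w F (tuple5 a b c d w).
Proof.
rewrite !pair_big (reindex (fun p => tuple5 p.1.1.1.1 p.1.1.1.2 p.1.1.2 p.1.2 p.2)) //=.
exists (fun f => (f (inord 0), f (inord 1), f (inord 2), f (inord 3), f (inord 4))).
  by move=> [[[[a b] c] d] w] _; rewrite !ffunE !inordK.
by move=> f _; rewrite tuple5_eta.
Qed.

Lemma injectiveb_tuple5 a b c d w : injectiveb (tuple5 a b c d w) = uniq [:: a; b; c; d; w].
Proof.
rewrite /injectiveb /dinjectiveb.
have -> : [seq tuple5 a b c d w i | i <- enum 'I_5] =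
          [seq nth a [:: a; b; c; d; w] i | i <- [seq val i | i <- enum 'I_5]].
  by rewrite -map_comp; apply: eq_map => i; rewrite ffunE.
by rewrite val_enum_ord.
Qed.

End FiveTuples.

Section LabelledCounts.
Variables (T : finType) (r : rel T).

Definition count_M :=
  \sum_a \sum_b \sum_c \sum_d \sum_w (uniq [:: a; b; c; d; w] && r a b && r c d : nat).

(* A copy of M' is labelled (w, a, b, c, d), with path w a b and edge c d, so that
   deleting the edge w a leaves a labelled copy of M whose isolated vertex is w. *)
Definition count_M' :=
  \sum_a \sum_b \sum_c \sum_d \sum_w
    (uniq [:: w; a; b; c; d] && r w a && r a b && r c d : nat).

End LabelledCounts.

Section EmbeddingCounts.
Variables (n : nat) (E : {set {set 'I_n}}) (r : rel 'I_n).
Hypothesis E_r : forall a b, ([set a; b] \in E) = r a b.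

Lemma card_embeddings_M : #|embeddings M_graph E| = count_M r.
Proof.
rewrite -sum_indicator_card sum_ffun5; do 5!(apply: eq_bigr => ? _).
by rewrite inE injectiveb_tuple5 /M_graph !(imsetU, imset_set1, subUset, sub1set) !E_r
  !ffunE !inordK // /= andbA.
Qed.

Lemma card_embeddings_M' : #|embeddings M'_graph E| = count_M' r.
Proof.
(* sum_ffun5 enumerates (w, a, b, c, d): make the sum over w the innermost one. *)
rewrite -sum_indicator_card sum_ffun5.
do 4!(rewrite exchange_big; apply: eq_bigr => ? _); apply: eq_bigr => ? _.
by rewrite inE injectiveb_tuple5 /M'_graph !(imsetU, imset_set1, subUset, sub1set) !E_r
  !ffunE !inordK // /= !andbA.
Qed.

End EmbeddingCounts.

(* Twice the number of edges of T_2(m). *)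
Definition t2_arcs m := 2 * m./2 * (m - m./2).

Lemma leq_t2_arcs t m : 2 * t * (m - t) <= t2_arcs m.
Proof.
rewrite /t2_arcs; have := odd_double_half m; rewrite -mul2n; move: m./2 => h mE.
by have [th|ht] := leqP t h; nia.
Qed.

Lemma t2_arcs_sub2 m : t2_arcs (m - 2) = 2 * (m./2 - 1) * (m - m./2 - 1).
Proof. by case: m => [|[|m]] //; rewrite /t2_arcs subSS /=; congr (_ * _ * _); lia. Qed.

Lemma sum_fresh (T : finType) (s : seq T) :
  uniq s -> \sum_w (w \notin s : nat) = #|T| - size s.
Proof.
move/card_uniqP <-; rewrite -(cardC (mem s)) addKn -sum_indicator_card.
by apply: eq_bigr => w _; rewrite !inE.
Qed.

Section Relation.
Variables (T : finType) (r : rel T).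

Definition arcs (W : {set T}) := \sum_a \sum_b ([&& a \in W, b \in W & r a b] : nat).

Hypotheses (r_sym : symmetric r) (r_irr : irreflexive r).
Hypothesis r_tf : forall a b c, r a b -> r b c -> r a c -> False.

Lemma mantel W : arcs W <= t2_arcs #|W|.
Proof.
have [->|[v0 v0W]] := set_0Vmem W.
  by rewrite /arcs big1 // => a _; rewrite big1 // => b _; rewrite inE.
pose arc c x := ([&& c \in W, x \in W & r c x] : nat).
pose deg c := #|[set x in W | r c x]|.
have degE c : \sum_x arc c x = (c \in W) * deg c.
  rewrite /arc /deg -sum_indicator_card; case: (c \in W) => /=; last by rewrite mul0n big1.
  by rewrite mul1n; apply: eq_bigr => x _; rewrite inE.
have [v vW deg_max] := @arg_maxnP _ v0 (mem W) deg v0W.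
set N := [set x in W | r v x].
(* N, the neighbourhood of a vertex of maximum degree, is independent, so every arc
   has an end in W :\: N, whose vertices have degree at most #|N|. *)
have N_indep c x : c \in N -> x \in N -> r c x = false.
  rewrite !inE => /andP [_ vc] /andP [_ vx]; apply/negP => cx.
  exact: r_tf vc cx vx.
have arc_out c x : arc c x <= arc c x * ((c \notin N) + (x \notin N)).
  rewrite /arc; case cN: (c \in N); case xN: (x \in N) => /=; rewrite ?muln1 // ?muln2.
    by rewrite N_indep ?andbF.
  by rewrite -addnn leq_addr.
have out_deg : \sum_c \sum_x arc c x * (c \notin N) <= #|W :\: N| * #|N|.
  rewrite -sum_indicator_card big_distrl /=; apply: leq_sum => c _.
  rewrite -big_distrl /= degE mulnAC [(c \in W) * _]mulnC mulnb -in_setD leq_mul2l.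
  by case: (boolP (c \in W :\: N)) => // /setDP [/deg_max].
have out_sym : \sum_c \sum_x arc c x * (x \notin N) = \sum_c \sum_x arc c x * (c \notin N).
  rewrite exchange_big; apply: eq_bigr => c _; apply: eq_bigr => x _.
  by rewrite /arc r_sym andbCA.
have cardWN : #|W :\: N| = #|W| - #|N|.
  by rewrite cardsD (setIidPr _) //; apply/subsetP => x; rewrite inE => /andP [].
apply: leq_trans (leq_t2_arcs #|N| #|W|); rewrite -cardWN mulnAC -mulnA mul2n -addnn.
apply: leq_trans (leq_add out_deg out_deg); rewrite -[X in _ <= _ + X]out_sym -big_split /=.
apply: leq_sum => c _; rewrite -big_split /=; apply: leq_sum => x _.
by rewrite -mulnDr arc_out.
Qed.

Lemma rel_neq a b : r a b -> a != b.
Proof. by apply: contraTneq => ->; rewrite r_irr. Qed.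

Lemma uniq_off_edge a b c d : r a b ->
  (uniq [:: a; b; c; d] && r c d) = [&& c \in ~: [set a; b], d \in ~: [set a; b] & r c d].
Proof.
move=> ab; case cd: (r c d); last by rewrite !andbF.
rewrite /= !inE (negbTE (rel_neq ab)) (negbTE (rel_neq cd)) ![c == _]eq_sym ![d == _]eq_sym.
by case: (a == c); case: (a == d); case: (b == c); case: (b == d).
Qed.

Lemma count_ME :
  count_M r = (#|T| - 4) * \sum_a \sum_b r a b * arcs (~: [set a; b]).
Proof.
rewrite big_distrr; apply: eq_bigr => a _; rewrite big_distrr; apply: eq_bigr => b _.
case ab: (r a b); rewrite [RHS]/=; last first.
  by rewrite muln0; do 3!(apply: big1 => ? _); rewrite andbF.
rewrite mul1n big_distrr; apply: eq_bigr => c _; rewrite big_distrr; apply: eq_bigr => d _.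
have uniq5 w : uniq [:: a; b; c; d; w] = (w \notin [:: a; b; c; d]) && uniq [:: a; b; c; d].
  exact: (rcons_uniq [:: a; b; c; d] w).
rewrite [RHS]/= -uniq_off_edge //; case U: (uniq [:: a; b; c; d] && r c d); last first.
  by rewrite muln0; apply: big1 => w _; rewrite uniq5 andbT -andbA U andbF.
case/andP: U => U cd; rewrite muln1 -(sum_fresh U).
by apply: eq_bigr => w _; rewrite uniq5 U cd !andbT.
Qed.

Lemma double_count_M' : count_M' r + count_M' r =
  \sum_a \sum_b \sum_c \sum_d \sum_w
    (uniq [:: a; b; c; d; w] && r a b && r c d) * (r w a + r w b).
Proof.
have rotE a b c d w : uniq [:: w; a; b; c; d] = uniq [:: a; b; c; d; w].
  exact: esym (rot_uniq 1 [:: w; a; b; c; d]).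
have swapE a b s : uniq [:: b, a & s] = uniq [:: a, b & s].
  by apply/perm_uniq/permPl; exact: (perm_catCA [:: b] [:: a] s).
have end_a : count_M' r = \sum_a \sum_b \sum_c \sum_d \sum_w
    (uniq [:: a; b; c; d; w] && r a b && r c d) * r w a.
  by do 5!(apply: eq_bigr => ? _); rewrite mulnb rotE; case: (r _ _); rewrite ?andbT ?andbF.
have end_b : count_M' r = \sum_a \sum_b \sum_c \sum_d \sum_w
    (uniq [:: a; b; c; d; w] && r a b && r c d) * r w b.
  by rewrite end_a exchange_big; do 5!(apply: eq_bigr => ? _); rewrite swapE r_sym.
rewrite {1}end_a end_b; do 5!(rewrite -big_split; apply: eq_bigr => ? _).
by rewrite mulnDr.
Qed.

Lemma leq_count_M : count_M r <= (#|T| - 4) * t2_arcs #|T| * t2_arcs (#|T| - 2).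
Proof.
rewrite count_ME -mulnA leq_mul2l; apply/orP; right.
apply: (@leq_trans (\sum_a \sum_b r a b * t2_arcs (#|T| - 2))).
  apply: leq_sum => a _; apply: leq_sum => b _.
  case ab: (r a b); rewrite //= !mul1n.
  have <- : #|~: [set a; b]| = #|T| - 2.
    by rewrite -(cardsC [set a; b]) cards2 rel_neq // addKn.
  exact: mantel.
under eq_bigr do rewrite -big_distrl /=; rewrite -big_distrl leq_mul2r /=.
apply/orP; right; rewrite -cardsT; apply: leq_trans (mantel _).
by apply: eq_leq; do 2!(apply: eq_bigr => ? _); rewrite !inE.
Qed.

Lemma leq_count_M' : 2 * count_M' r <= count_M r.
Proof.
have one_side a b w : r a b -> r w a + r w b <= 1.
  by move=> ab; case wa: (r w a); case wb: (r w b) => //; case: (r_tf wa ab wb).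
rewrite mul2n -addnn double_count_M'; apply: leq_sum => a _; apply: leq_sum => b _.
do 3!(apply: leq_sum => ? _); case ab: (r a b); rewrite ?andbF //= andbT.
by rewrite -[X in _ <= X]muln1 leq_mul2l one_side ?orbT.
Qed.

End Relation.

Section CompleteBipartite.
Variables (T : finType) (A : {set T}).

Definition cross : rel T := fun a b => (a \in A) != (b \in A).

Lemma cross_sym : symmetric cross.
Proof. by move=> a b; rewrite /cross eq_sym. Qed.

Lemma cross_irr : irreflexive cross.
Proof. by move=> a; rewrite /cross eqxx. Qed.

Lemma cross_tf a b c : cross a b -> cross b c -> cross a c -> False.
Proof. by rewrite /cross; case: (a \in A); case: (b \in A); case: (c \in A). Qed.

Lemma cross_one_side a b w : cross a b -> cross w a + cross w b = 1.
Proof. by rewrite /cross; case: (a \in A); case: (b \in A); case: (w \in A). Qed.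

Lemma arcs_cross W : arcs cross W = 2 * #|W :&: A| * #|W :\: A|.
Proof.
have row a : \sum_b ([&& a \in W, b \in W & cross a b] : nat) =
    (a \in W :&: A) * #|W :\: A| + (a \in W :\: A) * #|W :&: A|.
  rewrite !inE -!sum_indicator_card /cross.
  case: (a \in W); last by rewrite big1 // andbF !mul0n.
  by case: (a \in A); rewrite /= ?mul0n ?mul1n ?addn0 ?add0n; apply: eq_bigr => b _;
    rewrite !inE; case: (b \in A); rewrite ?andbT ?andbF.
rewrite /arcs (eq_bigr _ (fun a _ => row a)) big_split -!big_distrl /= !sum_indicator_card.
by rewrite -mulnA mul2n -addnn mulnC.
Qed.

Lemma arcs_cross_off_edge a b :
  cross a b -> arcs cross (~: [set a; b]) = 2 * (#|A| - 1) * (#|~: A| - 1).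
Proof.
wlog aA : a b / a \in A.
  move=> wlog_aA ab; have [aA|aA] := boolP (a \in A); first exact: wlog_aA.
  rewrite setUC wlog_aA 1?cross_sym //.
  by move: ab; rewrite /cross (negbTE aA); case: (b \in A).
move=> ab; have bA : b \notin A by move: ab; rewrite /cross aA; case: (b \in A).
have capE : ~: [set a; b] :&: A = A :\ a.
  apply/setP => x; rewrite !inE negb_or; case: (x =P b) => [->|_]; last by rewrite andbT.
  by rewrite (negbTE bA) !andbF.
have diffE : ~: [set a; b] :\: A = ~: A :\ b.
  apply/setP => x; rewrite !inE negb_or; case: (x =P a) => [->|_] /=; last by rewrite andbC.
  by rewrite aA !andbF.
by rewrite arcs_cross capE diffE (cardsD1 a A) (cardsD1 b (~: A)) aA inE bA !add1n !subn1.
Qed.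

Lemma count_M'_cross : 2 * count_M' cross = count_M cross.
Proof.
rewrite mul2n -addnn (double_count_M' cross_sym).
do 5!(apply: eq_bigr => ? _); case: (boolP (cross _ _)) => ab; last by rewrite andbF.
by rewrite (cross_one_side _ ab) muln1.
Qed.

Hypothesis A_half : #|A| = #|T|./2.

Lemma count_M_cross : count_M cross = (#|T| - 4) * t2_arcs #|T| * t2_arcs (#|T| - 2).
Proof.
have cardAC : #|~: A| = #|T| - #|T|./2 by rewrite -A_half -(cardsC A) addKn.
rewrite (count_ME cross_irr) -mulnA; congr (_ * _).
transitivity (\sum_a \sum_b cross a b * t2_arcs (#|T| - 2)).
  apply: eq_bigr => a _; apply: eq_bigr => b _; case: (boolP (cross a b)) => ab //=.
  by rewrite arcs_cross_off_edge // t2_arcs_sub2 A_half cardAC.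
under eq_bigr do rewrite -big_distrl; rewrite -big_distrl /=; congr (_ * _).
have arcsT : arcs cross setT = t2_arcs #|T| by rewrite arcs_cross setTI setTD A_half cardAC.
by rewrite -arcsT; do 2!(apply: eq_bigr => ? _); rewrite !inE.
Qed.

End CompleteBipartite.

Definition lower_half n : {set 'I_n} := [set i : 'I_n | i < n./2].

Lemma card_lower_half n : #|lower_half n| = n./2.
Proof.
have le_half : n./2 <= n by rewrite leq_half_double -addnn; lia.
have widen_inj : injective (widen_ord le_half) by move=> i j [/val_inj].
rewrite -[RHS]card_ord -(card_imset _ widen_inj); apply: eq_card => i.
rewrite inE; apply/idP/imsetP => [lti|[j _ ->]]; last exact: (ltn_ord j).
by exists (Ordinal lti) => //; apply: val_inj.
Qed.

Lemma T2_edge n (a b : 'I_n) : ([set a; b] \in T2 n) = cross (lower_half n) a b.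
Proof.
rewrite /cross !inE; apply/existsP/idP => [[i /existsP [j /and3P [lti lej /eqP abE]]]|].
  have iab : i \in [set a; b] by rewrite abE set21.
  have jab : j \in [set a; b] by rewrite abE set22.
  move: lti lej; rewrite [n./2 <= _]leqNgt.
  by case/set2P: iab => ->; case/set2P: jab => ->; case: (a < _); case: (b < _).
case lta: (a < n./2); case ltb: (b < n./2) => //= _.
  by exists a; apply/existsP; exists b; rewrite lta leqNgt ltb eqxx.
by exists b; apply/existsP; exists a; rewrite ltb leqNgt lta setUC eqxx.
Qed.

Lemma T2_simple n : simple_graph (T2 n).
Proof.
apply/forall_inP => e; rewrite inE => /existsP [i /existsP [j /and3P [lti lej /eqP ->]]].
have ij : i != j by apply: contraTneq lti => ->; rewrite -leqNgt.
by rewrite cards2 ij.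
Qed.

Lemma T2_triangle_free n : triangle_free (T2 n).
Proof.
apply/negP => /existsP [a /existsP [b /existsP [c]]].
by rewrite !T2_edge => /and3P [ab bc ac]; apply: (cross_tf ab bc ac).
Qed.

Section SimpleGraph.
Variables (n : nat) (E : {set {set 'I_n}}).

Definition edge_rel : rel 'I_n := fun a b => [set a; b] \in E.

Lemma edge_rel_sym : symmetric edge_rel.
Proof. by move=> a b; rewrite /edge_rel setUC. Qed.

Lemma edge_rel_irr : simple_graph E -> irreflexive edge_rel.
Proof. by move=> /forall_inP simE a; apply/negP => /simE; rewrite setUid cards1. Qed.

Lemma edge_rel_tf : triangle_free E ->
  forall a b c, edge_rel a b -> edge_rel b c -> edge_rel a c -> False.
Proof.
move=> /negP noK3 a b c ab bc ac; apply: noK3.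
by apply/existsP; exists a; apply/existsP; exists b; apply/existsP; exists c; apply/and3P.
Qed.

Hypotheses (E_simple : simple_graph E) (E_tf : triangle_free E).

Lemma leq_embeddings_M_T2 : #|embeddings M_graph E| <= #|embeddings M_graph (T2 n)|.
Proof.
rewrite (card_embeddings_M (r := edge_rel)) // (card_embeddings_M (@T2_edge n)).
rewrite count_M_cross; last by rewrite card_lower_half card_ord.
exact: leq_count_M edge_rel_sym (edge_rel_irr E_simple) (edge_rel_tf E_tf).
Qed.

Lemma leq_embeddings_M'_T2 : #|embeddings M'_graph E| <= #|embeddings M'_graph (T2 n)|.
Proof.
rewrite (card_embeddings_M' (r := edge_rel)) // (card_embeddings_M' (@T2_edge n)).
rewrite -(leq_pmul2l (isT : 0 < 2)) count_M'_cross count_M_cross; last first.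
  by rewrite card_lower_half card_ord.
apply: leq_trans (leq_count_M' edge_rel_sym (edge_rel_tf E_tf)) _.
exact: leq_count_M edge_rel_sym (edge_rel_irr E_simple) (edge_rel_tf E_tf).
Qed.

End SimpleGraph.

Lemma ex_K3_T2 n k (H : {set {set 'I_k}}) :
  (forall E : {set {set 'I_n}}, simple_graph E -> triangle_free E ->
     #|embeddings H E| <= #|embeddings H (T2 n)|) ->
  ex_K3 n H = num_copies H (T2 n).
Proof.
move=> le_T2; apply/eqP; rewrite eqn_leq; apply/andP; split.
  by apply/bigmax_leqP => E /andP [E_simple E_tf]; apply/leq_num_copies/le_T2.
by apply: (leq_bigmax_cond (F := num_copies H)); rewrite T2_simple T2_triangle_free.
Qed.

Theorem mainTheorem11 (n : nat) :
  ex_K3 n M_graph = num_copies M_graph (T2 n) /\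
  ex_K3 n M'_graph = num_copies M'_graph (T2 n).
Proof.
by split; apply: ex_K3_T2 => E; [exact: leq_embeddings_M_T2 | exact: leq_embeddings_M'_T2].
Qed.
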